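(* Let $0<r_i<r_o$, $0<h<H$, $n>0$, $p>0$, and set $\Omega^-=[r_i,r_o]\times[0,h]$ in the $(r,z)$-plane. Let $\boldsymbol\sigma^0$ be the axisymmetric stress field $$\sigma^0_r=a+a_r r^{-2/n},\quad \sigma^0_\theta=a+a_\theta r^{-2/n},\quad \sigma^0_z=a+a_z r^{-2/n},\quad \sigma^0_{rz}=0,$$ with $$a=p\,\frac{r_i^{2/n}}{r_o^{2/n}-r_i^{2/n}},\quad a_r=-p\,\frac{r_i^{2/n}r_o^{2/n}}{r_o^{2/n}-r_i^{2/n}},\quad a_\theta=\frac{n-2}{n}a_r,\quad a_z=\frac{n-1}{n}a_r,$$ and put $c=3^{\frac{n-1}{2}}\,a_r|a_r|^{n-1}\,n^{-n}$. Then for every admissible virtual stress field $\delta\boldsymbol\sigma$ (defined in the context) $$\int_{\Omega^-}\dot{\boldsymbol\varepsilon}(\boldsymbol\sigma^0):\delta\boldsymbol\sigma\;r\,dr\,dz=-\int_{r_i}^{r_o}\frac{c}{r}\,\delta\sigma_{rz}(r,h)\,r\,dr .$$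
   Context: Axisymmetric stress fields in a pipe are described in cylindrical coordinates by components $\sigma_r,\sigma_\theta,\sigma_z,\sigma_{rz}$ depending on $(r,z)\in[r_i,r_o]\times[0,H]$ (all other shear components vanish). An admissible virtual stress field $\delta\boldsymbol\sigma$ is a continuously differentiable such field on $[r_i,r_o]\times[0,H]$ satisfying the axisymmetric equilibrium equations $$\frac{\partial \sigma_r}{\partial r}+\frac{1}{r}(\sigma_r-\sigma_\theta)+\frac{\partial\sigma_{rz}}{\partial z}=0,\qquad \frac{\partial\sigma_{rz}}{\partial r}+\frac{1}{r}\sigma_{rz}+\frac{\partial\sigma_z}{\partial z}=0,$$ and the homogeneous boundary conditions $\sigma_r=\sigma_{rz}=0$ at $r=r_i$ and $r=r_o$, and $\sigma_{rz}=0$ at $z=0$ and $z=H$. Norton's creep law (with unit coefficient): $\dot{\boldsymbol\varepsilon}(\boldsymbol\sigma)=\boldsymbol s\,(\sigma_{vM})^{n-1}$, where $\boldsymbol s=\boldsymbol\sigma-\frac13\mathrm{tr}(\boldsymbol\sigma)\boldsymbol I$ is the stress deviator and $\sigma_{vM}=\sqrt{\tfrac32\boldsymbol s:\boldsymbol s}$. For axisymmetric tensors, $\boldsymbol\varepsilon:\boldsymbol\sigma=\varepsilon_r\sigma_r+\varepsilon_\theta\sigma_\theta+\varepsilon_z\sigma_z+2\varepsilon_{rz}\sigma_{rz}$. *)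

From Stdlib Require Import Reals Lra.
From Coquelicot Require Import Coquelicot.
Open Scope R_scope.

Definition in_rect (r0 r1 z0 z1 : R) (r z : R) : Prop :=
  r0 <= r <= r1 /\ z0 <= z <= z1.

Definition cont_on_rect (r0 r1 z0 z1 : R) (f : R -> R -> R) : Prop :=
  forall r z, in_rect r0 r1 z0 z1 r z ->
    filterlim (fun p : R * R => f (fst p) (snd p))
      (within (fun p : R * R => in_rect r0 r1 z0 z1 (fst p) (snd p)) (locally (r, z)))
      (locally (f r z)).

Definition partial_r_on_rect (r0 r1 z0 z1 : R) (f fr : R -> R -> R) : Prop :=
  forall r z, in_rect r0 r1 z0 z1 r z ->
    filterlim (fun t => (f t z - f r z) / (t - r))
      (within (fun t => r0 <= t <= r1 /\ t <> r) (locally r))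
      (locally (fr r z)).

Definition partial_z_on_rect (r0 r1 z0 z1 : R) (f fz : R -> R -> R) : Prop :=
  forall r z, in_rect r0 r1 z0 z1 r z ->
    filterlim (fun t => (f r t - f r z) / (t - z))
      (within (fun t => z0 <= t <= z1 /\ t <> z) (locally z))
      (locally (fz r z)).

Definition C1_on_rect (r0 r1 z0 z1 : R) (f fr fz : R -> R -> R) : Prop :=
  cont_on_rect r0 r1 z0 z1 f /\
  partial_r_on_rect r0 r1 z0 z1 f fr /\ partial_z_on_rect r0 r1 z0 z1 f fz /\
  cont_on_rect r0 r1 z0 z1 fr /\ cont_on_rect r0 r1 z0 z1 fz.

(** Axisymmetric stress field: components sigma_r, sigma_theta, sigma_z, sigma_rz
    as functions of (r,z); the other shear components vanish. *)
Record axi_stress := AxiStress {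
  s_r : R -> R -> R; s_th : R -> R -> R; s_z : R -> R -> R; s_rz : R -> R -> R }.

Definition admissible (ri ro H : R) (ds : axi_stress) : Prop :=
  exists d_r_r d_r_z d_th_r d_th_z d_z_r d_z_z d_rz_r d_rz_z : R -> R -> R,
    C1_on_rect ri ro 0 H (s_r ds) d_r_r d_r_z /\
    C1_on_rect ri ro 0 H (s_th ds) d_th_r d_th_z /\
    C1_on_rect ri ro 0 H (s_z ds) d_z_r d_z_z /\
    C1_on_rect ri ro 0 H (s_rz ds) d_rz_r d_rz_z /\
    (forall r z, in_rect ri ro 0 H r z ->
       d_r_r r z + / r * (s_r ds r z - s_th ds r z) + d_rz_z r z = 0 /\
       d_rz_r r z + / r * s_rz ds r z + d_z_z r z = 0) /\
    (forall z, 0 <= z <= H ->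
       s_r ds ri z = 0 /\ s_rz ds ri z = 0 /\ s_r ds ro z = 0 /\ s_rz ds ro z = 0) /\
    (forall r, ri <= r <= ro -> s_rz ds r 0 = 0 /\ s_rz ds r H = 0).

(** Real power x^y: Rpower for x > 0; at x <= 0 we use the convention
    0^0 = 1 and 0 otherwise (never used in the theorem, where the base is > 0). *)
Definition rpow (x y : R) : R :=
  if Rlt_dec 0 x then Rpower x y else if Req_EM_T y 0 then 1 else 0.

Definition tr3 (sr sth sz : R) : R := (sr + sth + sz) / 3.

Definition von_mises (sr sth sz srz : R) : R :=
  let m := tr3 sr sth sz in
  sqrt (3 / 2 * ((sr - m)^2 + (sth - m)^2 + (sz - m)^2 + 2 * srz^2)).

(** Norton creep law with unit coefficient: eps_dot = s * (sigma_vM)^(n-1). *)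
Definition norton (n : R) (s : axi_stress) : axi_stress :=
  let vm r z := von_mises (s_r s r z) (s_th s r z) (s_z s r z) (s_rz s r z) in
  let m r z := tr3 (s_r s r z) (s_th s r z) (s_z s r z) in
  AxiStress (fun r z => (s_r s r z - m r z) * rpow (vm r z) (n - 1))
            (fun r z => (s_th s r z - m r z) * rpow (vm r z) (n - 1))
            (fun r z => (s_z s r z - m r z) * rpow (vm r z) (n - 1))
            (fun r z => s_rz s r z * rpow (vm r z) (n - 1)).

Definition ddot (e s : axi_stress) (r z : R) : R :=
  s_r e r z * s_r s r z + s_th e r z * s_th s r z + s_z e r z * s_z s r z
  + 2 * s_rz e r z * s_rz s r z.

Definition coef_a (ri ro n p : R) : R :=
  p * rpow ri (2 / n) / (rpow ro (2 / n) - rpow ri (2 / n)).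
Definition coef_ar (ri ro n p : R) : R :=
  - p * (rpow ri (2 / n) * rpow ro (2 / n)) / (rpow ro (2 / n) - rpow ri (2 / n)).
Definition coef_ath (ri ro n p : R) : R := (n - 2) / n * coef_ar ri ro n p.
Definition coef_az (ri ro n p : R) : R := (n - 1) / n * coef_ar ri ro n p.

Definition sigma0 (ri ro n p : R) : axi_stress :=
  AxiStress
    (fun r _ => coef_a ri ro n p + coef_ar ri ro n p * rpow r (- 2 / n))
    (fun r _ => coef_a ri ro n p + coef_ath ri ro n p * rpow r (- 2 / n))
    (fun r _ => coef_a ri ro n p + coef_az ri ro n p * rpow r (- 2 / n))
    (fun _ _ => 0).

Definition coef_c (ri ro n p : R) : R :=
  rpow 3 ((n - 1) / 2) * coef_ar ri ro n p * rpow (Rabs (coef_ar ri ro n p)) (n - 1)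
  * rpow n (- n).

(* For sigma0 the stress deviator is (q, -q, 0, 0) with q = a_r r^(-2/n) / n, so its von
   Mises stress is sqrt 3 |q| and Norton's law gives
   eps(sigma0) : dsigma = c / r^2 (dsigma_r - dsigma_th).
   The first equilibrium equation turns r eps(sigma0) : dsigma into
   -c (d_r dsigma_r + d_z dsigma_rz). Integrated over [ri, ro] x [0, h] this divergence leaves
   only boundary terms (fundamental theorem of calculus in z, and in r under the z-integral);
   dsigma_r vanishes at r = ri, ro and dsigma_rz at z = 0, so only -c times the integral of
   dsigma_rz(r, h) remains. *)

From Stdlib Require Import Reals Lra.
From Coquelicot Require Import Coquelicot.
Open Scope R_scope.

Lemma continuity_2d_pt_section_l (k : R -> R -> R) x y :
  continuity_2d_pt k x y -> continuity_pt (fun u => k u y) x.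
Proof.
  intros Hk eps Heps. destruct (Hk (mkposreal eps Heps)) as [d Hd].
  exists d. split; [apply cond_pos |]. intros u [_ Hu].
  apply Hd; [exact Hu |]. rewrite Rminus_eq_0, Rabs_R0. apply cond_pos.
Qed.

Lemma continuity_2d_pt_section_r (k : R -> R -> R) x y :
  continuity_2d_pt k x y -> continuity_pt (fun v => k x v) y.
Proof.
  intros Hk eps Heps. destruct (Hk (mkposreal eps Heps)) as [d Hd].
  exists d. split; [apply cond_pos |]. intros v [_ Hv].
  apply Hd; [| exact Hv]. rewrite Rminus_eq_0, Rabs_R0. apply cond_pos.
Qed.

Lemma ex_RInt_continuity_pt (f : R -> R) a b :
  (forall x, continuity_pt f x) -> ex_RInt f a b.
Proof.
  intros Hf. apply (ex_RInt_continuous (V := R_CompleteNormedModule)).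
  intros x _. apply continuity_pt_filterlim, Hf.
Qed.

Lemma continuity_pt_RInt_param (k : R -> R -> R) a b x :
  a <= b -> (forall u v, continuity_2d_pt k u v) ->
  continuity_pt (fun u => RInt (k u) a b) x.
Proof.
  intros Hab Hk eps Heps.
  assert (He : 0 < eps / (b - a + 1)) by (apply Rdiv_lt_0_compat; lra).
  destruct (uniform_continuity_2d_1d' k a b x (fun t _ => Hk x t) (mkposreal _ He))
    as [d Hd].
  exists d. split; [apply cond_pos |]. intros u [_ Hu]. simpl in Hu |- *.
  unfold R_dist in Hu |- *.
  assert (Hint : forall w, ex_RInt (k w) a b)
    by (intros w; apply ex_RInt_continuity_pt; intros t; apply continuity_2d_pt_section_r, Hk).
  rewrite <- (RInt_minus (V := R_CompleteNormedModule)) by apply Hint.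
  eapply Rle_lt_trans.
  - apply (abs_RInt_le_const _ a b (eps / (b - a + 1))); [exact Hab | |].
    + apply (ex_RInt_minus (V := R_CompleteNormedModule)); apply Hint.
    + intros t Ht. left. apply Hd; split_Rabs; lra.
  - apply Rmult_lt_reg_r with (b - a + 1); [lra |].
    field_simplify; lra.
Qed.

Lemma is_derive_within_interior (F : R -> R) a b x l :
  a < x < b ->
  filterlim (fun t => (F t - F x) / (t - x))
    (within (fun t => a <= t <= b /\ t <> x) (locally x)) (locally l) ->
  is_derive F x l.
Proof.
  intros Hx Hl. apply is_derive_Reals. intros eps Heps.
  destruct (proj1 (filterlim_locally _ _) Hl (mkposreal _ Heps)) as [d Hd].
  set (d' := Rmin d (Rmin (x - a) (b - x))).
  assert (Hd' : 0 < d') by (apply Rmin_pos; [apply cond_pos | apply Rmin_pos; lra]).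
  pose proof (Rmin_l d (Rmin (x - a) (b - x))). pose proof (Rmin_r d (Rmin (x - a) (b - x))).
  pose proof (Rmin_l (x - a) (b - x)). pose proof (Rmin_r (x - a) (b - x)).
  exists (mkposreal _ Hd'). simpl. intros e He0 He. unfold d' in He.
  specialize (Hd (x + e)). replace (x + e - x) with e in Hd by ring.
  apply Hd.
  - change (Rabs (x + e - x) < d). split_Rabs; lra.
  - split; [split |]; split_Rabs; lra.
Qed.

Definition cont_ext_on (a b : R) (f : R -> R) : Prop :=
  exists fe, (forall x, continuity_pt fe x) /\ (forall x, a <= x <= b -> fe x = f x).

Lemma cont_ext_on_sub a b a' b' f :
  a <= a' -> b' <= b -> cont_ext_on a b f -> cont_ext_on a' b' f.
Proof.
  intros Ha Hb [fe [Cfe Efe]]. exists fe. split; [exact Cfe |].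
  intros x Hx. apply Efe. lra.
Qed.

Lemma ex_RInt_cont_ext_on a b f : a <= b -> cont_ext_on a b f -> ex_RInt f a b.
Proof.
  intros Hab [fe [Cfe Efe]]. apply (ex_RInt_ext fe).
  - intros x Hx. rewrite Rmin_left, Rmax_right in Hx by lra. apply Efe. lra.
  - apply ex_RInt_continuity_pt, Cfe.
Qed.

(* Unlike Coquelicot's is_RInt_derive, F need only be differentiable in the interior: the mean
   value theorem applied to Fe - RInt fe a handles the endpoints. *)
Lemma is_RInt_derive_interior (F f : R -> R) a b :
  a < b -> (forall x, a < x < b -> is_derive F x (f x)) ->
  cont_ext_on a b F -> cont_ext_on a b f -> is_RInt f a b (F b - F a).
Proof.
  intros Hab HD [Fe [CFe EFe]] [fe [Cfe Efe]].
  set (I := fun x => RInt fe a x).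
  assert (HI : forall x, is_derive I x (fe x)).
  { intros x. apply (is_derive_RInt fe I a x).
    - apply filter_forall. intros y. apply (RInt_correct (V := R_CompleteNormedModule)).
      apply ex_RInt_continuity_pt, Cfe.
    - apply continuity_pt_filterlim, Cfe. }
  assert (Hval : Fe b - Fe a = I b - I a).
  { destruct (MVT_gen (fun x => Fe x - I x) a b (fun _ => 0)) as [c [_ Hc]].
    - intros x Hx. rewrite Rmin_left, Rmax_right in Hx by lra.
      assert (HFe : is_derive Fe x (fe x)).
      { rewrite Efe by lra. apply (is_derive_ext_loc F); [| apply HD; lra].
        apply (locally_interval _ x a b); [exact (proj1 Hx) | exact (proj2 Hx) |].
        intros y Hay Hyb. symmetry. apply EFe. simpl in Hay, Hyb. lra. }
      replace 0 with (minus (fe x) (fe x)) by (unfold minus, plus, opp; simpl; ring).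
      exact (is_derive_minus _ _ _ _ _ HFe (HI x)).
    - intros x _. apply continuity_pt_minus; [apply CFe |].
      apply continuity_pt_filterlim, (ex_derive_continuous I). eexists. apply HI.
    - lra. }
  apply (is_RInt_ext fe).
  - intros x Hx. rewrite Rmin_left, Rmax_right in Hx by lra. apply Efe. lra.
  - rewrite <- EFe, <- (EFe a), Hval by lra. unfold I.
    rewrite (RInt_point (V := R_CompleteNormedModule)), Rminus_0_r.
    apply (RInt_correct (V := R_CompleteNormedModule)), ex_RInt_continuity_pt, Cfe.
Qed.

Lemma RInt_ext_scal (f g : R -> R) k a b :
  ex_RInt g a b -> (forall x, Rmin a b < x < Rmax a b -> f x = k * g x) ->
  RInt f a b = k * RInt g a b.
Proof.
  intros Hg Hfg. rewrite (RInt_ext f (fun x => scal k (g x))) by exact Hfg.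
  apply (RInt_scal (V := R_CompleteNormedModule)), Hg.
Qed.

Lemma RInt_eq_0 (f : R -> R) a b :
  a <= b -> (forall x, a <= x <= b -> f x = 0) -> RInt f a b = 0.
Proof.
  intros Hab Hf. rewrite (RInt_ext f (fun _ => 0)).
  - rewrite (RInt_const (V := R_CompleteNormedModule)). apply Rmult_0_r.
  - intros x Hx. rewrite Rmin_left, Rmax_right in Hx by lra. apply Hf. lra.
Qed.

Definition clamp (a b x : R) : R := Rmax a (Rmin b x).

Lemma clamp_in a b x : a <= b -> a <= clamp a b x <= b.
Proof. intros. unfold clamp, Rmax, Rmin. repeat destruct Rle_dec; lra. Qed.

Lemma clamp_id a b x : a <= x <= b -> clamp a b x = x.
Proof. intros. unfold clamp, Rmax, Rmin. repeat destruct Rle_dec; lra. Qed.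

Lemma clamp_lipschitz a b x y :
  a <= b -> Rabs (clamp a b x - clamp a b y) <= Rabs (x - y).
Proof. intros. unfold clamp, Rmax, Rmin. repeat destruct Rle_dec; split_Rabs; lra. Qed.

(* Coquelicot's integration and parametric-derivative theorems need continuity on whole
   neighbourhoods, so a function known only on the closed rectangle is extended to the plane by
   clamping its arguments. *)
Definition rect_ext (r0 r1 z0 z1 : R) (g : R -> R -> R) (u v : R) : R :=
  g (clamp r0 r1 u) (clamp z0 z1 v).

Lemma rect_ext_id r0 r1 z0 z1 g u v :
  in_rect r0 r1 z0 z1 u v -> rect_ext r0 r1 z0 z1 g u v = g u v.
Proof. intros [Hu Hv]. unfold rect_ext. rewrite !clamp_id by assumption. reflexivity. Qed.

Lemma continuity_2d_pt_rect_ext r0 r1 z0 z1 g :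
  r0 <= r1 -> z0 <= z1 -> cont_on_rect r0 r1 z0 z1 g ->
  forall x y, continuity_2d_pt (rect_ext r0 r1 z0 z1 g) x y.
Proof.
  intros Hr Hz Hg x y eps.
  assert (Hin : in_rect r0 r1 z0 z1 (clamp r0 r1 x) (clamp z0 z1 y))
    by (split; apply clamp_in; assumption).
  destruct (proj1 (filterlim_locally _ _) (Hg _ _ Hin) eps) as [d Hd].
  exists d. intros u v Hu Hv.
  apply (Hd (clamp r0 r1 u, clamp z0 z1 v)); [split | split; apply clamp_in; assumption].
  - eapply Rle_lt_trans; [apply clamp_lipschitz; assumption | exact Hu].
  - eapply Rle_lt_trans; [apply clamp_lipschitz; assumption | exact Hv].
Qed.

Section Rectangle.

Variables r0 r1 z0 z1 : R.
Hypothesis Hr : r0 < r1.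
Hypothesis Hz : z0 <= z1.

Lemma cont_ext_on_section_z g r :
  cont_on_rect r0 r1 z0 z1 g -> r0 <= r <= r1 -> cont_ext_on z0 z1 (g r).
Proof.
  intros Hg Hrr. exists (rect_ext r0 r1 z0 z1 g r). split.
  - intros v. apply continuity_2d_pt_section_r, continuity_2d_pt_rect_ext; [lra | lra | exact Hg].
  - intros v Hv. apply rect_ext_id. split; assumption.
Qed.

Lemma cont_ext_on_section_r g z :
  cont_on_rect r0 r1 z0 z1 g -> z0 <= z <= z1 -> cont_ext_on r0 r1 (fun r => g r z).
Proof.
  intros Hg Hzz. exists (fun u => rect_ext r0 r1 z0 z1 g u z). split.
  - intros u. apply continuity_2d_pt_section_l, continuity_2d_pt_rect_ext; [lra | lra | exact Hg].
  - intros u Hu. apply rect_ext_id. split; assumption.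
Qed.

Lemma ex_RInt_section_z g r a b :
  cont_on_rect r0 r1 z0 z1 g -> r0 <= r <= r1 -> z0 <= a -> a <= b -> b <= z1 ->
  ex_RInt (g r) a b.
Proof.
  intros Hg Hrr Ha Hab Hb. apply ex_RInt_cont_ext_on; [exact Hab |].
  apply (cont_ext_on_sub z0 z1); [exact Ha | exact Hb | apply cont_ext_on_section_z; assumption].
Qed.

Lemma ex_RInt_section_r g z :
  cont_on_rect r0 r1 z0 z1 g -> z0 <= z <= z1 -> ex_RInt (fun r => g r z) r0 r1.
Proof.
  intros Hg Hzz. apply ex_RInt_cont_ext_on; [lra | apply cont_ext_on_section_r; assumption].
Qed.

Lemma cont_ext_on_RInt_param g a b :
  cont_on_rect r0 r1 z0 z1 g -> z0 <= a -> a <= b -> b <= z1 ->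
  cont_ext_on r0 r1 (fun r => RInt (g r) a b).
Proof.
  intros Hg Ha Hab Hb. exists (fun u => RInt (rect_ext r0 r1 z0 z1 g u) a b). split.
  - intros u. apply continuity_pt_RInt_param; [exact Hab |].
    apply continuity_2d_pt_rect_ext; [lra | lra | exact Hg].
  - intros u Hu. apply RInt_ext. intros v Hv.
    rewrite Rmin_left, Rmax_right in Hv by lra. apply rect_ext_id. split; lra.
Qed.

Lemma is_RInt_partial_z k kz r a b :
  cont_on_rect r0 r1 z0 z1 k -> partial_z_on_rect r0 r1 z0 z1 k kz ->
  cont_on_rect r0 r1 z0 z1 kz -> r0 <= r <= r1 -> z0 <= a -> a < b -> b <= z1 ->
  is_RInt (kz r) a b (k r b - k r a).
Proof.
  intros Ck Pk Ckz Hrr Ha Hab Hb.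
  apply is_RInt_derive_interior; [exact Hab | | |].
  - intros z Hzz. apply (is_derive_within_interior (k r) z0 z1); [lra |].
    apply Pk. split; lra.
  - apply (cont_ext_on_sub z0 z1); [lra | lra |]. apply cont_ext_on_section_z; assumption.
  - apply (cont_ext_on_sub z0 z1); [lra | lra |]. apply cont_ext_on_section_z; assumption.
Qed.

Lemma is_derive_RInt_param_rect g gr r a b :
  cont_on_rect r0 r1 z0 z1 g -> partial_r_on_rect r0 r1 z0 z1 g gr ->
  cont_on_rect r0 r1 z0 z1 gr -> r0 < r < r1 -> z0 <= a -> a <= b -> b <= z1 ->
  is_derive (fun u => RInt (g u) a b) r (RInt (gr r) a b).
Proof.
  intros Cg Pg Cgr Hrr Ha Hab Hb.
  (* Clamping t keeps the derivative jointly continuous around (r, t) even at the edge t = z0. *)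
  set (f := fun u t => g u (clamp z0 z1 t)).
  assert (Hf : forall u t, r0 < u < r1 -> is_derive (fun w => f w t) u (gr u (clamp z0 z1 t))).
  { intros u t Hu. apply (is_derive_within_interior _ r0 r1); [exact Hu |].
    apply Pg. split; [lra | apply clamp_in, Hz]. }
  assert (Hnear : locally r (fun u => r0 < u < r1))
    by (apply (locally_interval _ r r0 r1); [apply Hrr | apply Hrr | tauto]).
  apply (is_derive_ext_loc (fun u => RInt (f u) a b)).
  { revert Hnear. apply filter_imp. intros u Hu. apply RInt_ext. intros t Ht.
    rewrite Rmin_left, Rmax_right in Ht by lra. unfold f. rewrite clamp_id by lra. reflexivity. }
  replace (RInt (gr r) a b) with (RInt (fun t => Derive (fun w => f w t) r) a b).
  2: { apply RInt_ext. intros t Ht. rewrite Rmin_left, Rmax_right in Ht by lra.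
       transitivity (gr r (clamp z0 z1 t)); [apply is_derive_unique, Hf, Hrr |].
       rewrite clamp_id by lra. reflexivity. }
  apply is_derive_RInt_param.
  - revert Hnear. apply filter_imp. intros u Hu t _. eexists. apply Hf, Hu.
  - intros t _. apply (continuity_2d_pt_ext_loc (rect_ext r0 r1 z0 z1 gr)).
    + assert (Hd : 0 < Rmin (r - r0) (r1 - r)) by (apply Rmin_pos; lra).
      exists (mkposreal _ Hd). simpl. intros u v Hu _.
      pose proof (Rmin_l (r - r0) (r1 - r)). pose proof (Rmin_r (r - r0) (r1 - r)).
      assert (Hu' : r0 < u < r1) by (split_Rabs; lra).
      unfold rect_ext. rewrite (clamp_id r0 r1 u) by lra.
      symmetry. apply is_derive_unique, Hf, Hu'.
    + apply continuity_2d_pt_rect_ext; [lra | lra | exact Cgr].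
  - revert Hnear. apply filter_imp. intros u Hu.
    apply (ex_RInt_ext (rect_ext r0 r1 z0 z1 g u)).
    + intros t _. unfold rect_ext, f. rewrite clamp_id by lra. reflexivity.
    + apply ex_RInt_continuity_pt. intros t.
      apply continuity_2d_pt_section_r, continuity_2d_pt_rect_ext; [lra | lra | exact Cg].
Qed.

Lemma is_RInt_RInt_partial_r g gr a b :
  cont_on_rect r0 r1 z0 z1 g -> partial_r_on_rect r0 r1 z0 z1 g gr ->
  cont_on_rect r0 r1 z0 z1 gr -> z0 <= a -> a <= b -> b <= z1 ->
  is_RInt (fun r => RInt (gr r) a b) r0 r1 (RInt (g r1) a b - RInt (g r0) a b).
Proof.
  intros Cg Pg Cgr Ha Hab Hb.
  apply (is_RInt_derive_interior (fun r => RInt (g r) a b)); [exact Hr | | |].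
  - intros r Hrr. apply is_derive_RInt_param_rect; assumption.
  - apply cont_ext_on_RInt_param; assumption.
  - apply cont_ext_on_RInt_param; assumption.
Qed.

Lemma is_RInt_RInt_divergence g gr gz k kr kz a b :
  C1_on_rect r0 r1 z0 z1 g gr gz -> C1_on_rect r0 r1 z0 z1 k kr kz ->
  z0 <= a -> a < b -> b <= z1 ->
  is_RInt (fun r => RInt (fun z => gr r z + kz r z) a b) r0 r1
    ((RInt (g r1) a b - RInt (g r0) a b)
     + (RInt (fun r => k r b) r0 r1 - RInt (fun r => k r a) r0 r1)).
Proof.
  intros [Cg [Pgr [_ [Cgr _]]]] [Ck [_ [Pkz [_ Ckz]]]] Ha Hab Hb.
  apply (is_RInt_ext (fun r => RInt (gr r) a b + (k r b - k r a))).
  - intros r Hrr. rewrite Rmin_left, Rmax_right in Hrr by lra. symmetry.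
    apply is_RInt_unique, (is_RInt_plus (V := R_NormedModule)).
    + apply (RInt_correct (V := R_CompleteNormedModule)), ex_RInt_section_z; auto; lra.
    + apply is_RInt_partial_z; auto; lra.
  - apply (is_RInt_plus (V := R_NormedModule)).
    + apply is_RInt_RInt_partial_r; auto; lra.
    + apply (is_RInt_minus (V := R_NormedModule));
        apply (RInt_correct (V := R_CompleteNormedModule)), ex_RInt_section_r; auto; lra.
Qed.

End Rectangle.

Lemma rpow_pos x y : 0 < x -> rpow x y = Rpower x y.
Proof. intros Hx. unfold rpow. destruct Rlt_dec; [reflexivity | lra]. Qed.

Lemma coef_ar_lt0 ri ro n p :
  0 < ri -> ri < ro -> 0 < n -> 0 < p -> coef_ar ri ro n p < 0.
Proof.
  intros Hri Hro Hn Hp. unfold coef_ar. rewrite !rpow_pos by lra.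
  assert (Hlt : Rpower ri (2 / n) < Rpower ro (2 / n))
    by (apply Rlt_Rpower_l; [apply Rdiv_lt_0_compat |]; lra).
  pose proof (exp_pos (2 / n * ln ri)) as Hi. pose proof (exp_pos (2 / n * ln ro)) as Ho.
  unfold Rpower in *. unfold Rdiv.
  rewrite <- Ropp_mult_distr_l, <- Ropp_mult_distr_l.
  apply Ropp_lt_gt_0_contravar, Rmult_lt_0_compat.
  - apply Rmult_lt_0_compat; [lra | apply Rmult_lt_0_compat; lra].
  - apply Rinv_0_lt_compat. lra.
Qed.

Lemma von_mises_pure_shear m q : von_mises (m + q) (m - q) m 0 = sqrt 3 * Rabs q.
Proof.
  unfold von_mises, tr3. cbv zeta.
  replace ((m + q + (m - q) + m) / 3) with m by field.
  replace (3 / 2 * ((m + q - m) ^ 2 + (m - q - m) ^ 2 + (m - m) ^ 2 + 2 * 0 ^ 2))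
    with (3 * Rsqr q) by (unfold Rsqr; field).
  rewrite sqrt_mult_alt, sqrt_Rsqr_abs; [reflexivity | lra].
Qed.

Lemma ddot_norton_pure_shear n s ds r z m q :
  s_r s r z = m + q -> s_th s r z = m - q -> s_z s r z = m -> s_rz s r z = 0 ->
  ddot (norton n s) ds r z
  = q * rpow (sqrt 3 * Rabs q) (n - 1) * (s_r ds r z - s_th ds r z).
Proof.
  intros Er Eth Ez Erz. unfold ddot, norton. cbv zeta. simpl.
  rewrite Er, Eth, Ez, Erz, von_mises_pure_shear.
  unfold tr3. replace ((m + q + (m - q) + m) / 3) with m by field. ring.
Qed.

Lemma pure_shear_power A n r :
  A <> 0 -> 0 < n -> 0 < r ->
  A * rpow r (- 2 / n) / n * rpow (sqrt 3 * Rabs (A * rpow r (- 2 / n) / n)) (n - 1)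
  = rpow 3 ((n - 1) / 2) * A * rpow (Rabs A) (n - 1) * rpow n (- n) / (r * r).
Proof.
  intros HA Hn Hr.
  (* Write every positive quantity as an exponential: both sides become A * exp of equal
     exponents. *)
  pose proof (Rabs_pos_lt A HA) as HA'.
  set (L := - 2 / n * ln r).
  set (K := / 2 * ln 3 + ln (Rabs A) + L - ln n).
  assert (HL : rpow r (- 2 / n) = exp L) by (rewrite rpow_pos by lra; reflexivity).
  assert (HK : sqrt 3 * Rabs (A * exp L / n) = exp K).
  { rewrite <- Rpower_sqrt by lra. unfold Rpower, K, Rminus.
    rewrite Rabs_div, Rabs_mult, (Rabs_pos_eq (exp L)), (Rabs_pos_eq n)
      by (try apply Rlt_le, exp_pos; lra).
    rewrite !exp_plus, exp_Ropp, !exp_ln by lra. field. lra. }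
  rewrite HL, HK, !rpow_pos by (try apply exp_pos; lra).
  unfold Rpower. rewrite ln_exp.
  assert (El : A * exp L / n * exp ((n - 1) * K) = A * exp (L + - ln n + (n - 1) * K)).
  { rewrite !exp_plus, exp_Ropp, exp_ln by lra. field. lra. }
  assert (Er : exp ((n - 1) / 2 * ln 3) * A * exp ((n - 1) * ln (Rabs A)) * exp (- n * ln n)
               / (r * r)
             = A * exp ((n - 1) / 2 * ln 3 + (n - 1) * ln (Rabs A) + - n * ln n
                        + - ln r + - ln r)).
  { rewrite !exp_plus, !exp_Ropp, exp_ln by lra. field. lra. }
  rewrite El, Er. do 2 f_equal. unfold K, L. field. lra.
Qed.

Lemma ddot_norton_sigma0 ri ro n p ds r z :
  0 < ri -> ri < ro -> 0 < n -> 0 < p -> 0 < r ->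
  ddot (norton n (sigma0 ri ro n p)) ds r z
  = coef_c ri ro n p / (r * r) * (s_r ds r z - s_th ds r z).
Proof.
  intros Hri Hro Hn Hp Hr.
  pose proof (coef_ar_lt0 ri ro n p Hri Hro Hn Hp) as HA.
  set (A := coef_ar ri ro n p) in *.
  set (rho := rpow r (- 2 / n)).
  rewrite (ddot_norton_pure_shear n _ ds r z (coef_a ri ro n p + (n - 1) / n * A * rho)
             (A * rho / n))
    by (simpl; unfold coef_ath, coef_az; fold A rho; field; lra).
  unfold rho. rewrite pure_shear_power by lra.
  unfold coef_c. fold A. field. lra.
Qed.

Lemma RInt_ddot_norton_sigma0 ri ro n p ds r dr dz a b :
  0 < ri -> ri < ro -> 0 < n -> 0 < p -> 0 < r ->
  ex_RInt (fun z => dr z + dz z) a b ->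
  (forall z, Rmin a b < z < Rmax a b -> dr z + / r * (s_r ds r z - s_th ds r z) + dz z = 0) ->
  RInt (fun z => ddot (norton n (sigma0 ri ro n p)) ds r z) a b * r
  = - coef_c ri ro n p * RInt (fun z => dr z + dz z) a b.
Proof.
  intros Hri Hro Hn Hp Hr Hint Heq.
  rewrite (RInt_ext_scal (fun z => ddot (norton n (sigma0 ri ro n p)) ds r z)
             (fun z => dr z + dz z) (- coef_c ri ro n p / r)).
  - field. lra.
  - exact Hint.
  - intros z Hz. rewrite ddot_norton_sigma0 by assumption.
    replace (coef_c ri ro n p / (r * r) * (s_r ds r z - s_th ds r z))
      with (coef_c ri ro n p / r * (/ r * (s_r ds r z - s_th ds r z))) by (field; lra).
    replace (/ r * (s_r ds r z - s_th ds r z)) with (- (dr z + dz z))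
      by (specialize (Heq z Hz); lra).
    field. lra.
Qed.

Theorem mainTheorem1 (ri ro h H n p : R) :
  0 < ri -> ri < ro -> 0 < h -> h < H -> 0 < n -> 0 < p ->
  forall ds : axi_stress, admissible ri ro H ds ->
  RInt (fun r => RInt (fun z => ddot (norton n (sigma0 ri ro n p)) ds r z) 0 h * r) ri ro
  = - RInt (fun r => coef_c ri ro n p / r * s_rz ds r h * r) ri ro.
Proof.
  intros Hri Hro Hh HhH Hn Hp ds
    [drr [drz [dthr [dthz [dzr [dzz [drzr [drzz
      [C_r [_ [_ [C_rz [Heq [Hbc_r Hbc_z]]]]]]]]]]]]]].
  set (c := coef_c ri ro n p).
  pose proof (is_RInt_RInt_divergence ri ro 0 H Hro ltac:(lra) (s_r ds) drr drz
                (s_rz ds) drzr drzz 0 h C_r C_rz ltac:(lra) Hh ltac:(lra)) as Hdiv.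
  apply (is_RInt_scal _ _ _ (- c)) in Hdiv. eapply is_RInt_ext in Hdiv.
  2: { intros r Hr. rewrite Rmin_left, Rmax_right in Hr by lra. symmetry.
       apply (RInt_ddot_norton_sigma0 ri ro n p ds r (drr r) (drzz r)); try lra.
       - apply (ex_RInt_plus (V := R_NormedModule));
           apply (ex_RInt_section_z ri ro 0 H); try lra; [apply C_r | apply C_rz].
       - intros z Hz. rewrite Rmin_left, Rmax_right in Hz by lra. apply Heq. split; lra. }
  rewrite (is_RInt_unique _ _ _ _ Hdiv),
    (RInt_ext_scal (fun r => c / r * s_rz ds r h * r) (fun r => s_rz ds r h) c),
    (RInt_eq_0 (s_r ds ro)), (RInt_eq_0 (s_r ds ri)), (RInt_eq_0 (fun r => s_rz ds r 0));
    try lra.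
  - change (- c * (0 - 0 + (RInt (fun r => s_rz ds r h) ri ro - 0))
            = - (c * RInt (fun r => s_rz ds r h) ri ro)).
    ring.
  - intros r Hr. exact (proj1 (Hbc_z r Hr)).
  - intros z Hz. exact (proj1 (Hbc_r z ltac:(lra))).
  - intros z Hz. exact (proj1 (proj2 (proj2 (Hbc_r z ltac:(lra))))).
  - apply (ex_RInt_section_r ri ro 0 H); [lra | lra | apply C_rz | lra].
  - intros r Hr. rewrite Rmin_left, Rmax_right in Hr by lra. field. lra.
Qed.
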